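(* Let $p$ be a prime and $m\ge 0$ an integer, and let $C_m=\{a\in\mathbb{Z}_p:\delta^m a=0\}$. Then the composition $C_m\subset\mathbb{Z}_p\to\mathbb{Z}_p/p^m\mathbb{Z}_p$ of the inclusion with the reduction map is a bijection.
   Context: $\mathbb{Z}_p$ is the ring of $p$-adic integers, $\delta:\mathbb{Z}_p\to\mathbb{Z}_p$ is the Fermat quotient operator $\delta a=(a-a^p)/p$, and $\delta^m$ is its $m$-th iterate ($\delta^0$ is the identity). *)

(* The ring Z_p of p-adic integers, built as the inverse
   limit of Z/p^n: an element is a coherent sequence of residues
   x_n in [0, p^n) with x_n = x_{n+1} mod p^n. *)
From mathcomp Require Import all_boot.
From Stdlib Require Import ClassicalEpsilon.
Set Implicit Arguments. Unset Strict Implicit. Unset Printing Implicit Defensive.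

Definition coherent (p : nat) (x : nat -> nat) : Prop :=
  forall n, x n = x n.+1 %% p ^ n.

Record Zp (p : nat) := MkZp { zval : nat -> nat; zcoh : coherent p zval }.

Lemma mod_up (p n z : nat) : z %% p ^ n.+1 %% p ^ n = z %% p ^ n.
Proof. by apply: modn_dvdm; rewrite expnS; apply: dvdn_mull. Qed.

Definition natZ_seq (p k : nat) (n : nat) := k %% p ^ n.
Lemma natZ_coh p k : coherent p (natZ_seq p k).
Proof. by move=> n; rewrite /natZ_seq mod_up. Qed.
Definition natZ (p k : nat) : Zp p := MkZp (natZ_coh p k).

Definition addZ_seq p (x y : Zp p) (n : nat) := (zval x n + zval y n) %% p ^ n.
Lemma addZ_coh p (x y : Zp p) : coherent p (addZ_seq x y).
Proof.
by move=> n; rewrite /addZ_seq (zcoh x n) (zcoh y n) mod_up modnDm.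
Qed.
Definition addZ p (x y : Zp p) : Zp p := MkZp (addZ_coh x y).

Definition mulZ_seq p (x y : Zp p) (n : nat) := (zval x n * zval y n) %% p ^ n.
Lemma mulZ_coh p (x y : Zp p) : coherent p (mulZ_seq x y).
Proof.
by move=> n; rewrite /mulZ_seq (zcoh x n) (zcoh y n) mod_up modnMm.
Qed.
Definition mulZ p (x y : Zp p) : Zp p := MkZp (mulZ_coh x y).

Definition expZ p (a : Zp p) (k : nat) : Zp p := iter k (mulZ a) (natZ p 1).

(* Fermat quotient: delta a = (a - a^p)/p, i.e. the (unique, since p is not a
   zero divisor and a = a^p mod p) b with p * b + a^p = a. *)
Definition delta p (a : Zp p) : Zp p :=
  epsilon (inhabits (natZ p 0))
    (fun b => addZ (mulZ (natZ p p) b) (expZ a p) = a).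

(* a = b in Z_p / p^m Z_p, i.e. a - b lies in the ideal p^m Z_p *)
Definition congrZ p (m : nat) (a b : Zp p) : Prop :=
  exists c : Zp p, a = addZ b (mulZ (natZ p (p ^ m)) c).

Definition Cm p (m : nat) (a : Zp p) : Prop := iter m (@delta p) a = natZ p 0.

(* The Fermat quotient of integers, d(x) = (x - x^p)/p, satisfies
   d(y + p^(k+1) t) = d(y) + p^k t  (mod p^(k+1)),
   because (y + z)^p = y^p + p z y^(p-1) modulo z^2.  Iterating,
   d^m(y + p^(k+m) t) = d^m(y) + p^k t  (mod p^(k+1)): changing y by p^(k+m) t
   moves d^m y at level k+1 by exactly p^k t.  So once a is known modulo
   p^(k+m), there is exactly one lift modulo p^(k+m+1) with d^m a = 0 modulo
   p^(k+1).  Starting from a residue modulo p^m and lifting level by level gives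
   both injectivity and surjectivity.  Finally, delta on Z_p, defined by
   choice, is d computed level-wise, since multiplication by p on Z_p is
   injective. *)
Set Warnings "-notation-overridden,-ambiguous-paths".
From mathcomp Require Import all_boot all_algebra ring.
From Stdlib Require Import ClassicalEpsilon FunctionalExtensionality ProofIrrelevance.
Set Implicit Arguments. Unset Strict Implicit.
Import GRing.Theory Num.Theory.
Local Open Scope ring_scope.

Lemma eqz_modP (d a b : int) : (a = b %[mod d])%Z <-> exists q, a = b + q * d.
Proof.
rewrite (rwP eqP) eqz_mod_dvd.
by split=> [/dvdzP [q e]|[q ->]]; [exists q; rewrite -e addrC subrK | apply/dvdzP; exists q; ring].
Qed.

Lemma eqz_mod_dvdW (d e a b : int) :
  (d %| e)%Z -> (a = b %[mod e])%Z -> (a = b %[mod d])%Z.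
Proof.
by case/dvdzP=> r -> /eqz_modP [q ->]; apply/eqz_modP; exists (q * r); ring.
Qed.

Lemma eqz_mod_mul2l (c d a b : int) :
  c != 0 -> (c * a = c * b %[mod c * d])%Z <-> (a = b %[mod d])%Z.
Proof.
move=> c0; rewrite !(rwP eqP) !eqz_mod_dvd -mulrBr dvdz_mul2l //.
Qed.

Lemma eqz_mod_small (d a b : nat) :
  (a < d)%N -> (b < d)%N -> (a%:Z = b%:Z %[mod d%:Z])%Z -> a = b.
Proof. by move=> ad bd; rewrite !modz_nat !modn_small // => -[]. Qed.

Lemma exprD_mod_sqr (y z : int) n :
  ((y + z) ^+ n.+1 = y ^+ n.+1 + n.+1%:R * z * y ^+ n %[mod z ^+ 2])%Z.
Proof.
apply/eqz_modP; elim: n => [|n [q IH]]; first by exists 0; rewrite expr0; ring.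
exists ((y + z) * q + n.+1%:R * y ^+ n).
rewrite exprS IH !(exprS y) -[n.+2]addn1 -[n.+1]addn1 !natrD; ring.
Qed.

Section FermatQuotient.

Variable p : nat.
Hypothesis p_prime : prime p.
Local Notation P := (p%:Z).

Lemma pZ_neq0 : P != 0.
Proof. by rewrite eqz_nat -lt0n prime_gt0. Qed.

Lemma pexpZ_neq0 n : P ^+ n != 0.
Proof. exact: expf_neq0 pZ_neq0. Qed.

Lemma fermat_littlez (x : int) : (x ^+ p = x %[mod P])%Z.
Proof.
rewrite -modzXm -[RHS]modz_mod.
case: (x %% P)%Z (modz_ge0 x pZ_neq0) => // r _.
by rewrite -natz -natrX natz modz_nat natz modz_nat fermat_little.
Qed.

Definition fermat_quot (x : int) : int := ((x - x ^+ p) %/ P)%Z.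

Lemma fermat_quotK x : fermat_quot x * P = x - x ^+ p.
Proof.
by apply: divzK; rewrite -eqz_mod_dvd (fermat_littlez x).
Qed.

Lemma fermat_quotD k y t :
  (fermat_quot (y + P ^+ k.+1 * t) = fermat_quot y + P ^+ k * t %[mod P ^+ k.+1])%Z.
Proof.
have /eqz_modP [q Hq] := exprD_mod_sqr y (P ^+ k.+1 * t) p.-1.
rewrite prednK ?prime_gt0 // natz in Hq.
apply/(eqz_mod_mul2l _ _ _ pZ_neq0)/eqz_modP.
exists (- (t * y ^+ p.-1 + q * P ^+ k * t ^+ 2)).
rewrite mulrDr ![P * fermat_quot _]mulrC !fermat_quotK Hq !exprS; ring.
Qed.

Lemma fermat_quot_mod n a b :
  (a = b %[mod P ^+ n.+1])%Z -> (fermat_quot a = fermat_quot b %[mod P ^+ n])%Z.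
Proof.
case/eqz_modP=> t ->; rewrite mulrC.
rewrite (eqz_mod_dvdW (dvdz_exp2l P (leqnSn n)) (fermat_quotD n b t)).
by rewrite addrC mulrC modzMDl.
Qed.

Lemma iter_fermat_quotD j k y t :
  (iter j fermat_quot (y + P ^+ (k + j) * t)
     = iter j fermat_quot y + P ^+ k * t %[mod P ^+ k.+1])%Z.
Proof.
elim: j k => [|j IH] k; first by rewrite addn0.
have /eqz_modP [s Hs] := IH k.+1.
rewrite !iterS -addSnnS Hs.
have -> : iter j fermat_quot y + P ^+ k.+1 * t + s * P ^+ k.+2
        = iter j fermat_quot y + P ^+ k.+1 * (t + s * P) by rewrite (exprS _ k.+1); ring.
by rewrite fermat_quotD; apply/eqz_modP; exists s; rewrite exprS; ring.
Qed.

Lemma iter_fermat_quot_mod m n a b :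
  (a = b %[mod P ^+ (n + m)])%Z ->
  (iter m fermat_quot a = iter m fermat_quot b %[mod P ^+ n])%Z.
Proof.
elim: m n => [|m IH] n; first by rewrite addn0.
by rewrite -addSnnS => /IH; rewrite !iterS; apply: fermat_quot_mod.
Qed.

Lemma pexpZ n : (p ^ n)%N%:Z = P ^+ n.
Proof. by rewrite -natz natrX natz. Qed.

Lemma modz_pexp a n : ((a %% p ^ n)%N%:Z = a%:Z %[mod P ^+ n])%Z.
Proof. by rewrite -modz_nat pexpZ modz_mod. Qed.

Lemma zval_lt (x : Zp p) n : (zval x n < p ^ n)%N.
Proof. by rewrite (zcoh x n) ltn_mod expn_gt0 prime_gt0. Qed.

Lemma zval_mod (x : Zp p) n k :
  (n <= k)%N -> ((zval x k)%:Z = (zval x n)%:Z %[mod P ^+ n])%Z.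
Proof.
move=> /subnKC <-; elim: (k - n)%N => [|d IH]; first by rewrite addn0.
rewrite addnS -IH; apply/esym/(eqz_mod_dvdW (dvdz_exp2l _ (leq_addr d n))).
by rewrite (zcoh x (n + d)) modz_pexp.
Qed.

Lemma Zp_ext (x y : Zp p) : zval x =1 zval y -> x = y.
Proof.
case: x y => [f hf] [g hg] /= /functional_extensionality fg.
by subst g; congr MkZp; apply: proof_irrelevance.
Qed.

Lemma Zp_eq_mod (x y : Zp p) :
  (forall n, ((zval x n)%:Z = (zval y n)%:Z %[mod P ^+ n])%Z) -> x = y.
Proof.
move=> xy; apply: Zp_ext => n.
by apply: (eqz_mod_small (zval_lt x n) (zval_lt y n)); rewrite pexpZ.
Qed.

Section ZpOfSeq.

Variable s : nat -> int.
Hypothesis s_coherent : forall n, (s n.+1 = s n %[mod P ^+ n])%Z.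

Let r n : nat := `|(s n %% P ^+ n)%Z|%N.

Let rE n : (r n)%:Z = (s n %% P ^+ n)%Z.
Proof. by rewrite gez0_abs // modz_ge0 // pexpZ_neq0. Qed.

Let r_coherent : coherent p r.
Proof.
move=> n; apply: (@eqz_mod_small (p ^ n)); rewrite ?ltn_mod ?expn_gt0 ?prime_gt0 //.
  by rewrite -ltz_nat rE pexpZ ltz_pmod // exprn_gt0 // ltz_nat prime_gt0.
rewrite pexpZ modz_pexp !rE !modz_mod -s_coherent.
by apply/esym/(eqz_mod_dvdW (dvdz_exp2l _ (leqnSn n))); rewrite modz_mod.
Qed.

Definition Zp_of : Zp p := MkZp r_coherent.

Lemma Zp_ofE n : ((zval Zp_of n)%:Z = s n %[mod P ^+ n])%Z.
Proof. by rewrite /= rE modz_mod. Qed.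

End ZpOfSeq.

Lemma zval_natZ k n : ((zval (natZ p k) n)%:Z = k%:Z %[mod P ^+ n])%Z.
Proof. exact: modz_pexp. Qed.

Lemma zval_addZ (x y : Zp p) n :
  ((zval (addZ x y) n)%:Z = (zval x n)%:Z + (zval y n)%:Z %[mod P ^+ n])%Z.
Proof. exact: modz_pexp. Qed.

Lemma zval_mulZ (x y : Zp p) n :
  ((zval (mulZ x y) n)%:Z = (zval x n)%:Z * (zval y n)%:Z %[mod P ^+ n])%Z.
Proof. exact: modz_pexp. Qed.

Lemma zval_mulZ_natZ k (x : Zp p) n :
  ((zval (mulZ (natZ p k) x) n)%:Z = k%:Z * (zval x n)%:Z %[mod P ^+ n])%Z.
Proof. by rewrite zval_mulZ -modzMml zval_natZ modzMml. Qed.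

Lemma zval_expZ (x : Zp p) k n :
  ((zval (expZ x k) n)%:Z = (zval x n)%:Z ^+ k %[mod P ^+ n])%Z.
Proof.
elim: k => [|k IH]; first exact: zval_natZ.
by rewrite /expZ iterS zval_mulZ -modzMmr IH modzMmr exprS.
Qed.

Lemma fermat_quot_coherent (x : Zp p) n :
  (fermat_quot (zval x n.+2) = fermat_quot (zval x n.+1) %[mod P ^+ n])%Z.
Proof. exact/fermat_quot_mod/zval_mod. Qed.

Definition fermat_quotZ (x : Zp p) : Zp p := Zp_of (fermat_quot_coherent x).

Lemma fermat_quotZ_spec (x : Zp p) :
  addZ (mulZ (natZ p p) (fermat_quotZ x)) (expZ x p) = x.
Proof.
apply: Zp_eq_mod => n.
rewrite zval_addZ -modzDml zval_mulZ_natZ -modzMmr Zp_ofE modzMmr modzDml.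
rewrite -modzDmr zval_expZ -modzXm -(zval_mod x (leqnSn n)) modzXm modzDmr.
by rewrite mulrC fermat_quotK subrK.
Qed.

Lemma mulpZ_addZ_inj (y u v : Zp p) :
  addZ (mulZ (natZ p p) u) y = addZ (mulZ (natZ p p) v) y -> u = v.
Proof.
move=> e; apply: Zp_eq_mod => n.
have := congr1 (fun z => (zval z n.+1)%:Z %% P ^+ n.+1)%Z e => /=.
rewrite !zval_addZ -!(modzDml (zval (mulZ _ _) _)) !zval_mulZ_natZ !modzDml.
move/eqP; rewrite eqz_modDr exprS => /eqP /(eqz_mod_mul2l _ _ _ pZ_neq0).
by rewrite (zval_mod u (leqnSn n)) (zval_mod v (leqnSn n)).
Qed.

Lemma delta_fermat_quotZ (x : Zp p) : delta x = fermat_quotZ x.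
Proof.
apply: (@mulpZ_addZ_inj (expZ x p)); rewrite fermat_quotZ_spec.
apply: (epsilon_spec _ (fun b => addZ (mulZ (natZ p p) b) (expZ x p) = x)).
by exists (fermat_quotZ x); apply: fermat_quotZ_spec.
Qed.

Lemma zval_iter_delta (x : Zp p) j n :
  ((zval (iter j (@delta p) x) n)%:Z
     = iter j fermat_quot (zval x (n + j))%:Z %[mod P ^+ n])%Z.
Proof.
elim: j n => [|j IH] n; first by rewrite addn0.
rewrite !iterS delta_fermat_quotZ Zp_ofE; apply: fermat_quot_mod.
by rewrite addnS -addSn IH.
Qed.

Lemma Cm_mod m (a : Zp p) :
  Cm m a <-> forall n, (iter m fermat_quot (zval a (n + m))%:Z = 0 %[mod P ^+ n])%Z.
Proof.
split=> [am n | am].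
  by rewrite -zval_iter_delta am zval_natZ.
by apply: Zp_eq_mod => n; rewrite zval_iter_delta zval_natZ am.
Qed.

Lemma congrZ_zval m (a b : Zp p) : congrZ m a b <-> zval a m = zval b m.
Proof.
split=> [[c ->] | ab].
  apply: (eqz_mod_small (zval_lt _ _) (zval_lt _ _)).
  by rewrite pexpZ zval_addZ -modzDmr zval_mulZ_natZ pexpZ modzMr addr0.
pose d n := (zval a (n + m))%:Z - (zval b (n + m))%:Z.
have d_dvd n : (P ^+ m %| d n)%Z.
  rewrite -eqz_mod_dvd; apply/eqP.
  by rewrite (zval_mod a (leq_addl n m)) ab -(zval_mod b (leq_addl n m)).
have coh n : ((d n.+1 %/ P ^+ m)%Z = (d n %/ P ^+ m)%Z %[mod P ^+ n])%Z.
  apply/(eqz_mod_mul2l _ _ _ (pexpZ_neq0 m)).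
  rewrite -exprD ![P ^+ m * _]mulrC !divzK // addnC /d addSn.
  have /eqz_modP [u ->] := zval_mod a (leqnSn (n + m)).
  have /eqz_modP [v ->] := zval_mod b (leqnSn (n + m)).
  by apply/eqz_modP; exists (u - v); ring.
exists (Zp_of coh); apply: Zp_eq_mod => n.
rewrite zval_addZ -modzDmr zval_mulZ_natZ -modzMmr Zp_ofE modzMmr modzDmr.
rewrite pexpZ mulrC divzK // /d.
have /eqz_modP [u ->] := zval_mod a (leq_addr m n).
have /eqz_modP [v ->] := zval_mod b (leq_addr m n).
by apply/eqz_modP; exists (v - u); ring.
Qed.

Lemma Cm_inj m (a b : Zp p) : Cm m a -> Cm m b -> zval a m = zval b m -> a = b.
Proof.
move=> /Cm_mod Ca /Cm_mod Cb ab.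
have lvl d : zval a (d + m) = zval b (d + m).
  elim: d => // d IH.
  have /eqz_modP [t ea] :
      ((zval a (d + m).+1)%:Z = (zval b (d + m).+1)%:Z %[mod P ^+ (d + m)])%Z.
    by rewrite (zval_mod a (leqnSn _)) IH -(zval_mod b (leqnSn _)).
  have : (P ^+ d * t = P ^+ d * 0 %[mod P ^+ d * P])%Z.
    rewrite mulr0 -exprSr.
    have := iter_fermat_quotD m d (zval b (d + m).+1) t.
    by rewrite mulrC -ea -addSn Ca -modzDml Cb modzDml add0r => <-.
  move/(eqz_mod_mul2l _ _ _ (pexpZ_neq0 d))/eqP; rewrite eqz_mod_dvd subr0.
  case/dvdzP=> s ts; apply: (eqz_mod_small (zval_lt _ _) (zval_lt _ _)).
  by rewrite pexpZ addSn ea ts; apply/eqz_modP; exists s; rewrite exprSr; ring.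
apply: Zp_ext => n; case: (leqP m n) => [/subnK <- // | /ltnW mn].
apply: (eqz_mod_small (zval_lt _ _) (zval_lt _ _)).
by rewrite pexpZ -(zval_mod a mn) ab (zval_mod b mn).
Qed.

Fixpoint Cm_approx m (b : int) j : int :=
  if j is j'.+1 then
    let g := Cm_approx m b j' in
    g - P ^+ (j' + m) * (iter m fermat_quot g %/ P ^+ j')%Z
  else b.

Lemma Cm_approx_mod m b j :
  (Cm_approx m b j.+1 = Cm_approx m b j %[mod P ^+ (j + m)])%Z.
Proof.
by apply/eqz_modP; exists (- (iter m fermat_quot (Cm_approx m b j) %/ P ^+ j)%Z) => /=; ring.
Qed.

Lemma iter_fermat_quot_Cm_approx m b j :
  (iter m fermat_quot (Cm_approx m b j) = 0 %[mod P ^+ j])%Z.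
Proof.
elim: j => [|j IH]; first by rewrite expr0 !modz1.
move/eqP: IH; rewrite eqz_mod_dvd subr0 => /divzK e.
rewrite /= -mulrN iter_fermat_quotD -{1}e mulrN.
by apply/eqz_modP; exists 0; rewrite exprS; ring.
Qed.

Lemma Cm_surj m (b : Zp p) : exists a : Zp p, Cm m a /\ zval a m = zval b m.
Proof.
pose s n := Cm_approx m (zval b m)%:Z (n - m).
have coh n : (s n.+1 = s n %[mod P ^+ n])%Z.
  rewrite /s; case: (leqP m n) => [mn | nm].
    by rewrite subSn // -[X in P ^+ X](subnK mn) Cm_approx_mod.
  have /eqP -> : (n.+1 - m == 0)%N by rewrite subn_eq0.
  by have /eqP -> : (n - m == 0)%N by rewrite subn_eq0 ltnW.
exists (Zp_of coh); split.
  apply/Cm_mod => n; rewrite (iter_fermat_quot_mod (Zp_ofE coh (n + m))).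
  by rewrite /s addnK iter_fermat_quot_Cm_approx.
apply: (eqz_mod_small (zval_lt _ _) (zval_lt _ _)).
by rewrite pexpZ Zp_ofE /s subnn.
Qed.

End FermatQuotient.

Local Close Scope ring_scope.

Theorem lemma4p1 (p m : nat) (hp : prime p) :
  (forall a b : Zp p, Cm m a -> Cm m b -> congrZ m a b -> a = b) /\
  (forall b : Zp p, exists a : Zp p, Cm m a /\ congrZ m a b).
Proof.
split=> [a b Ca Cb /(congrZ_zval hp) | b]; first exact: Cm_inj.
have [a [Ca ab]] := Cm_surj hp m b.
by exists a; split; [|apply/(congrZ_zval hp)].
Qed.
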